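(* Let $\mathbf s$ be a parity sequence for $\mathfrak{gl}_{m|n}$ and let $\mathbf s'$ be the parity sequence (for $\mathfrak{gl}_{n|m}$) defined by $s'_i=-s_{1-i}$ for all $i\in\mathbb Z$. Then there is an isomorphism of superalgebras $$\tau_{\mathbf s}:\ \mathcal E_{\mathbf s}(q_1,q_2,q_3)\to\mathcal E_{\mathbf s'}(q_3^{-1},q_2^{-1},q_1^{-1}),$$ given (coefficientwise in the generating series) by $$E_i(z)\mapsto E_{-i}(z),\qquad F_i(z)\mapsto -F_{-i}(z),\qquad K_i^\pm(z)\mapsto K_{-i}^\pm(z)\qquad(i\in\hat I).$$
   Context: Fix integers $m,n\ge 0$ with $m\ne n$ and $N=m+n\ge 3$. A parity sequence is $\mathbf s=(s_1,\dots,s_N)\in\{1,-1\}^N$ with exactly $m$ entries equal to $1$, extended to $(s_i)_{i\in\mathbb Z}$ by $s_{i+N}=s_i$. Let $\hat I=\{0,1,\dots,N-1\}$, indices always taken modulo $N$. For $i\in\hat I$ put $|i|=(1-s_is_{i+1})/2$. Define $A_{i,j}=(s_i+s_{i+1})\delta_{i,j}-s_i\delta_{i,j+1}-s_j\delta_{i+1,j}$ and $M_{i,j}$ by $M_{i+1,i}=-M_{i,i+1}=s_{i+1}$ and $M_{i,j}=0$ if $i\ne j\pm1$ ($i,j\in\hat I$). Let $\hat Q$ be the free abelian group on $\alpha_i$ ($i\in\hat I$) with symmetric bilinear form $\langle\alpha_i,\alpha_j\rangle=A_{i,j}$. Fix $d,q\in\mathbb C^\times$, put $q_1=dq^{-1}$,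 $q_2=q^2$, $q_3=d^{-1}q^{-1}$, and assume $q_1^aq_2^bq_3^c=1$ ($a,b,c\in\mathbb Z$) only if $a=b=c$. Let $\delta(z)=\sum_{n\in\mathbb Z}z^n$. $\mathcal E_{\mathbf s}=\mathcal E_{\mathbf s}(q_1,q_2,q_3)$ is the unital associative superalgebra generated by $E_{i,r},F_{i,r},H_{i,r'}$ and invertible $K_i$ ($i\in\hat I$, $r,r'\in\mathbb Z$, $r'\ne0$), with $|E_{i,r}|=|F_{i,r}|=|i|$ and all other generators even. Write $E_i(z)=\sum_kE_{i,k}z^{-k}$, $F_i(z)=\sum_kF_{i,k}z^{-k}$, $K_i^\pm(z)=K_i^{\pm1}\exp\big(\pm(q-q^{-1})\sum_{r>0}H_{i,\pm r}z^{\mp r}\big)$. Let $[X,Y]=XY-(-1)^{|X||Y|}YX$, and for homogeneous $X,Y$ of $\hat Q$-weights $\alpha,\beta$ (where $E_{i,r}$ has weight $\alpha_i$, $F_{i,r}$ weight $-\alpha_i$, $K_i,H_{i,r}$ weight $0$) let $[\![X,Y]\!]=XY-(-1)^{|X||Y|}q^{\langle\alpha,\beta\rangle}YX$. The defining relations are, for all $i,j\in\hat I$: (1) $K_iK_j=K_jK_i$, $K_iE_j(z)K_i^{-1}=q^{A_{i,j}}E_j(z)$, $K_iF_j(z)K_i^{-1}=q^{-A_{i,j}}F_j(z)$; (2) $K_i^\pm(z)K_j^\pm(w)=K_j^\pm(w)K_i^\pm(z)$, $K_i^-(z)K_j^+(w)=K_j^+(w)K_i^-(z)$; (3) $(d^{M_{i,j}}z-q^{A_{i,j}}w)K_i^\pm(z)E_j(w)=(d^{M_{i,j}}q^{A_{i,j}}z-w)E_j(w)K_i^\pm(z)$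 and $(d^{M_{i,j}}z-q^{-A_{i,j}}w)K_i^\pm(z)F_j(w)=(d^{M_{i,j}}q^{-A_{i,j}}z-w)F_j(w)K_i^\pm(z)$; (4) $[E_i(z),F_j(w)]=\frac{\delta_{i,j}}{q-q^{-1}}\big(\delta(w/z)K_i^+(w)-\delta(z/w)K_i^-(z)\big)$; (5) if $A_{i,j}=0$: $[E_i(z),E_j(w)]=0=[F_i(z),F_j(w)]$; if $A_{i,j}\ne0$: $(d^{M_{i,j}}z-q^{A_{i,j}}w)E_i(z)E_j(w)=(-1)^{|i||j|}(d^{M_{i,j}}q^{A_{i,j}}z-w)E_j(w)E_i(z)$ and $(d^{M_{i,j}}z-q^{-A_{i,j}}w)F_i(z)F_j(w)=(-1)^{|i||j|}(d^{M_{i,j}}q^{-A_{i,j}}z-w)F_j(w)F_i(z)$; (6) if $A_{i,i}\ne0$: $\mathrm{Sym}_{z_1,z_2}[\![E_i(z_1),[\![E_i(z_2),E_{i\pm1}(w)]\!]]\!]=0$ and the same with $F$ in place of $E$; if $mn\ne2$ and $A_{i,i}=0$: $\mathrm{Sym}_{z_1,z_2}[\![E_i(z_1),[\![E_{i+1}(w_1),[\![E_i(z_2),E_{i-1}(w_2)]\!]]\!]]\!]=0$ and the same with $F$; if $mn=2$ and $A_{i,i}\ne0$: $\mathrm{Sym}_{z_1,z_2}\mathrm{Sym}_{w_1,w_2}[\![E_{i-1}(z_1),[\![E_{i+1}(w_1),[\![E_{i-1}(z_2),[\![E_{i+1}(w_2),E_i(y)]\!]]\!]]\!]]\!]=\mathrm{Sym}_{z_1,z_2}\mathrm{Sym}_{w_1,w_2}[\![E_{i+1}(w_1),[\![E_{i-1}(z_1),[\![E_{i+1}(w_2),[\![E_{i-1}(z_2),E_i(y)]\!]]\!]]\!]]\!]$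 and the same with $F$. The algebra $\mathcal E_{\mathbf s'}(q_3^{-1},q_2^{-1},q_1^{-1})$ is defined in the same way with $(m,n)$ replaced by $(n,m)$, $\mathbf s$ by $\mathbf s'$, and $(q_1,q_2,q_3)$ replaced by $(q_3^{-1},q_2^{-1},q_1^{-1})$ (i.e. $(d,q)$ replaced by $(d,q^{-1})$). *)

From mathcomp Require Import all_boot all_algebra.
From mathcomp Require Import Rstruct complex.
Set Implicit Arguments.
Unset Strict Implicit.
Unset Printing Implicit Defensive.
Import GRing.Theory Num.Theory.
Local Open Scope ring_scope.

Notation CC := (Rdefinitions.R)[i].

(* Free unital associative C-algebra on a set X of generators,         *)
(* presented as formal terms modulo the congruence generated by the   *)
(* C-algebra axioms and a given set R of relations.  The quotient      *)
(* term X / (congr R) is the algebra presented by generators X and     *)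
(* relations R.                                                        *)

Inductive term (X : Type) : Type :=
| TG of X
| TC of CC
| TA of term X & term X
| TM of term X & term X.

Arguments TC {X}.

Definition tscal X (c : CC) (t : term X) : term X := TM (TC c) t.
Definition tneg X (t : term X) : term X := tscal (-1) t.
Definition tsub X (t u : term X) : term X := TA t (tneg u).
Definition tsum X (l : seq (term X)) : term X := foldr (@TA X) (TC 0) l.

Section Congr.
Variables (X : Type) (R : term X -> term X -> Prop).

Inductive congr : term X -> term X -> Prop :=
| cg_rel t u : R t u -> congr t u
| cg_refl t : congr t t
| cg_sym t u : congr t u -> congr u t
| cg_trans t u v : congr t u -> congr u v -> congr t v
| cg_add t t' u u' : congr t t' -> congr u u' -> congr (TA t u) (TA t' u')
| cg_mul t t' u u' : congr t t' -> congr u u' -> congr (TM t u) (TM t' u')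
| cg_addA t u v : congr (TA t (TA u v)) (TA (TA t u) v)
| cg_addC t u : congr (TA t u) (TA u t)
| cg_add0 t : congr (TA (TC 0) t) t
| cg_mulA t u v : congr (TM t (TM u v)) (TM (TM t u) v)
| cg_mul1l t : congr (TM (TC 1) t) t
| cg_mul1r t : congr (TM t (TC 1)) t
| cg_mulDl t u v : congr (TM (TA t u) v) (TA (TM t v) (TM u v))
| cg_mulDr t u v : congr (TM t (TA u v)) (TA (TM t u) (TM t v))
| cg_mul0l t : congr (TM (TC 0) t) (TC 0)
| cg_cstC c t : congr (TM (TC c) t) (TM t (TC c))
| cg_cstD a b : congr (TA (TC a) (TC b)) (TC (a + b))
| cg_cstM a b : congr (TM (TC a) (TC b)) (TC (a * b)).
End Congr.

Fixpoint tsubst X Y (g : X -> term Y) (t : term X) : term Y :=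
  match t with
  | TG x => g x
  | TC c => TC c
  | TA t u => TA (tsubst g t) (tsubst g u)
  | TM t u => TM (tsubst g t) (tsubst g u)
  end.

Inductive homog X (pg : X -> bool) : bool -> term X -> Prop :=
| h_gen x : homog pg (pg x) (TG x)
| h_cst c : homog pg false (TC c)
| h_zero p : homog pg p (TC 0)
| h_add p t u : homog pg p t -> homog pg p u -> homog pg p (TA t u)
| h_mul p p' t u : homog pg p t -> homog pg p' u -> homog pg (p (+) p') (TM t u).

(* Generators of E_s.  Index set \hat I = Z/NZ = 'Z_N (N = m+n >= 3).  *)
(*   GHp i r = H_{i,r+1},  GHm i r = H_{i,-(r+1)}   (r : nat)           *)
Inductive gen (N : nat) : Type :=
| GE of 'Z_N & int
| GF of 'Z_N & int
| GHp of 'Z_N & nat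
| GHm of 'Z_N & nat
| GK of 'Z_N
| GKinv of 'Z_N.

Section Qtor.
Variables (N : nat) (m n : nat) (s : 'Z_N -> int) (d q : CC).

Local Notation T := (term (gen N)).

(* |i| = (1 - s_i s_{i+1})/2, as a boolean *)
Definition par (i : 'Z_N) : bool := s i * s (i + 1) == -1.

Definition Amat (i j : 'Z_N) : int :=
  (s i + s (i + 1)) * ((i == j) : nat)%:Z - s i * ((i == j + 1) : nat)%:Z
  - s j * ((i + 1 == j) : nat)%:Z.

Definition Mmat (i j : 'Z_N) : int :=
  if i == j + 1 then s i else if j == i + 1 then - s j else 0.

(* weights in \hat Q = Z^{\hat I}, with the bilinear form given by A *)
Definition form (a b : 'Z_N -> int) : int :=
  \sum_(i : 'Z_N) \sum_(j : 'Z_N) a i * b j * Amat i j.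

Record hterm := HT { ht : T; hpar : bool; hwt : 'Z_N -> int }.

Definition sgn (b : bool) : CC := if b then -1 else 1.

Definition sbr (x y : hterm) : T :=
  tsub (TM (ht x) (ht y)) (tscal (sgn (hpar x && hpar y)) (TM (ht y) (ht x))).

Definition qbr (x y : hterm) : hterm :=
  HT (tsub (TM (ht x) (ht y))
        (tscal (sgn (hpar x && hpar y) * q ^ (form (hwt x) (hwt y)))
               (TM (ht y) (ht x))))
     (hpar x (+) hpar y) (fun k => hwt x k + hwt y k).

(* f = false : E ;  f = true : F *)
Definition ep (f : bool) : int := if f then -1 else 1.
Definition hX (f : bool) (i : 'Z_N) (r : int) : hterm :=
  HT (TG (if f then GF i r else GE i r)) (par i)
     (fun k => ep f * ((k == i) : nat)%:Z).
Definition Xg (f : bool) (i : 'Z_N) (r : int) : T := ht (hX f i r).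

(* p = true : H_{i,r}, r >= 1 ; p = false : H_{i,-r}, r >= 1 *)
Definition Hc (p : bool) (i : 'Z_N) (r : nat) : T :=
  TG (if p then GHp i r.-1 else GHm i r.-1).

(* coefficient of x^r in (sum_{k>=1} H_{i,+-k} x^k)^k *)
Fixpoint Xpow (p : bool) (i : 'Z_N) (k r : nat) : T :=
  match k with
  | 0 => if r == 0%N then TC 1 else TC 0
  | k'.+1 => tsum [seq TM (Hc p i a) (Xpow p i k' (r - a)) | a <- iota 1 r]
  end.

(* coefficient of x^r in exp(+-(q-q^{-1}) sum_{k>=1} H_{i,+-k} x^k) *)
Definition Expc (p : bool) (i : 'Z_N) (r : nat) : T :=
  let c := (if p then 1 else -1) * (q - q^-1) in
  tsum [seq tscal (c ^+ k / (k`!)%:R) (Xpow p i k r) | k <- iota 0 r.+1].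

(* coefficient of z^{-k} in K_i^+(z) (p = true) resp. K_i^-(z) (p = false) *)
Definition Kser (p : bool) (i : 'Z_N) (k : int) : T :=
  if p then
    (if (0 <= k)%R then TM (TG (GK i)) (Expc true i (absz k)) else TC 0)
  else
    (if (k <= 0)%R then TM (TG (GKinv i)) (Expc false i (absz k)) else TC 0).

Definition hE (i : 'Z_N) r := hX false i r.
Definition hF (i : 'Z_N) r := hX true i r.

(* defining relations (1)-(6), written coefficientwise *)
Inductive rel : T -> T -> Prop :=
| r0_KKinv i : rel (TM (TG (GK i)) (TG (GKinv i))) (TC 1)
| r0_KinvK i : rel (TM (TG (GKinv i)) (TG (GK i))) (TC 1)
| r1_KK i j : rel (TM (TG (GK i)) (TG (GK j))) (TM (TG (GK j)) (TG (GK i)))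
| r1_KX f i j r :
    rel (TM (TM (TG (GK i)) (Xg f j r)) (TG (GKinv i)))
        (tscal (q ^ (ep f * Amat i j)) (Xg f j r))
| r2_same p i j a b :
    rel (TM (Kser p i a) (Kser p j b)) (TM (Kser p j b) (Kser p i a))
| r2_mp i j a b :
    rel (TM (Kser false i a) (Kser true j b)) (TM (Kser true j b) (Kser false i a))
| r3 p f i j a b :
    rel (tsub (tscal (d ^ Mmat i j) (TM (Kser p i (a + 1)) (Xg f j b)))
              (tscal (q ^ (ep f * Amat i j)) (TM (Kser p i a) (Xg f j (b + 1)))))
        (tsub (tscal (d ^ Mmat i j * q ^ (ep f * Amat i j))
                     (TM (Xg f j b) (Kser p i (a + 1))))
              (TM (Xg f j (b + 1)) (Kser p i a)))
| r4 i j a b :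
    rel (sbr (hE i a) (hF j b))
        (tscal (((i == j) : nat)%:R / (q - q^-1))
               (tsub (Kser true i (a + b)) (Kser false i (a + b))))
| r5_zero f i j a b : Amat i j = 0 ->
    rel (sbr (hX f i a) (hX f j b)) (TC 0)
| r5 f i j a b : Amat i j != 0 ->
    rel (tsub (tscal (d ^ Mmat i j) (TM (Xg f i (a + 1)) (Xg f j b)))
              (tscal (q ^ (ep f * Amat i j)) (TM (Xg f i a) (Xg f j (b + 1)))))
        (tscal (sgn (par i && par j))
           (tsub (tscal (d ^ Mmat i j * q ^ (ep f * Amat i j))
                        (TM (Xg f j b) (Xg f i (a + 1))))
                 (TM (Xg f j (b + 1)) (Xg f i a))))
| r6a f (e : bool) i a b c : Amat i i != 0 ->
    let k := if e then i + 1 else i - 1 in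
    rel (TA (ht (qbr (hX f i a) (qbr (hX f i b) (hX f k c))))
            (ht (qbr (hX f i b) (qbr (hX f i a) (hX f k c)))))
        (TC 0)
| r6b f i a b c e : (m * n != 2)%N -> Amat i i = 0 ->
    rel (TA (ht (qbr (hX f i a) (qbr (hX f (i + 1) c)
                   (qbr (hX f i b) (hX f (i - 1) e)))))
            (ht (qbr (hX f i b) (qbr (hX f (i + 1) c)
                   (qbr (hX f i a) (hX f (i - 1) e))))))
        (TC 0)
| r6c f i a1 a2 b1 b2 c : (m * n == 2)%N -> Amat i i != 0 ->
    let L z1 z2 w1 w2 :=
      ht (qbr (hX f (i - 1) z1) (qbr (hX f (i + 1) w1)
           (qbr (hX f (i - 1) z2) (qbr (hX f (i + 1) w2) (hX f i c))))) in
    let R z1 z2 w1 w2 :=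
      ht (qbr (hX f (i + 1) w1) (qbr (hX f (i - 1) z1)
           (qbr (hX f (i + 1) w2) (qbr (hX f (i - 1) z2) (hX f i c))))) in
    rel (tsum [:: L a1 a2 b1 b2; L a2 a1 b1 b2; L a1 a2 b2 b1; L a2 a1 b2 b1])
        (tsum [:: R a1 a2 b1 b2; R a2 a1 b1 b2; R a1 a2 b2 b1; R a2 a1 b2 b1]).

(* equality in E_s = E_s(q1,q2,q3) with q1 = d q^{-1}, q2 = q^2, q3 = d^{-1} q^{-1} *)
Definition Eeq : T -> T -> Prop := congr rel.

Definition gpar (x : gen N) : bool :=
  match x with GE i _ | GF i _ => par i | _ => false end.

End Qtor.

From Pilot Require Import Defs.
From mathcomp Require Import all_boot all_algebra.
From mathcomp Require Import Rstruct complex.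
From mathcomp Require Import ring zify.
From Stdlib Require Import Setoid Morphisms FunctionalExtensionality.
Import GRing.Theory Num.Theory.
Local Open Scope ring_scope.
Set Implicit Arguments.
Unset Strict Implicit.
Unset Printing Implicit Defensive.

(* The substitution [tau] of generators (E_i -> E_(-i), F_i -> -F_(-i), H_(i,r) -> -H_(-i,r),
   K_i -> K_(-i)) is involutive.  Because s'_(-i) = -s_(i+1), it reverses the Dynkin diagram
   and negates the Cartan data: A'_(-i,-j) = -A_(i,j), M'_(-i,-j) = M_(i,j), |-i|' = |i|.
   Passing from q to q^-1 compensates the sign of A, so each defining relation of E_s is
   sent to a scalar multiple of a defining relation of E_s'; q-commutators are sent to
   q-commutators because the bilinear form on weights also changes sign.  The only
   exception is the quartic Serre relation at an odd node i, where i - 1 and i + 1 trade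
   places.  The swapped relation follows from the original one, from the anticommutation
   of E_i(z) with E_i(w) and from the supercommutation of E_(i-1) with E_(i+1): this is a
   noncommutative polynomial identity, checked by normalising words by reflection.
   Since s'' = s and (q^-1)^-1 = q, the same map in the other direction is an inverse. *)

#[global] Hint Resolve cg_refl : core.

Section CongrAlgebra.
Context {X : Type} {R : term X -> term X -> Prop}.
Local Notation "a ≈ b" := (congr R a b) (at level 70).

Global Instance congr_equiv : Equivalence (congr R).
Proof. split; [exact: cg_refl | exact: cg_sym | exact: cg_trans]. Qed.

Global Instance TA_proper : Proper (congr R ==> congr R ==> congr R) (@TA X).
Proof. by move=> ? ? h ? ? h'; apply: cg_add. Qed.

Global Instance TM_proper : Proper (congr R ==> congr R ==> congr R) (@TM X).
Proof. by move=> ? ? h ? ? h'; apply: cg_mul. Qed.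

Global Instance tscal_proper c : Proper (congr R ==> congr R) (@tscal X c).
Proof. by move=> ? ? h; apply: cg_mul. Qed.

Global Instance tneg_proper : Proper (congr R ==> congr R) (@tneg X).
Proof. by move=> ? ? h; apply: tscal_proper. Qed.

Global Instance tsub_proper : Proper (congr R ==> congr R ==> congr R) (@tsub X).
Proof. by move=> ? ? h ? ? h'; apply: TA_proper => //; apply: tneg_proper. Qed.

Implicit Types (x y z : term X) (a b c : CC).

Lemma add0t x : TA (TC 0) x ≈ x.
Proof. exact: cg_add0. Qed.

Lemma addtC x y : TA x y ≈ TA y x.
Proof. exact: cg_addC. Qed.

Lemma addt0 x : TA x (TC 0) ≈ x.
Proof. by rewrite addtC add0t. Qed.

Lemma addtA x y z : TA x (TA y z) ≈ TA (TA x y) z.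
Proof. exact: cg_addA. Qed.

Lemma mul0t x : TM (TC 0) x ≈ TC 0.
Proof. exact: cg_mul0l. Qed.

Lemma mult0 x : TM x (TC 0) ≈ TC 0.
Proof. by rewrite -cg_cstC mul0t. Qed.

Lemma scale1t x : tscal 1 x ≈ x.
Proof. exact: cg_mul1l. Qed.

Lemma scale0t x : tscal 0 x ≈ TC 0.
Proof. exact: cg_mul0l. Qed.

Lemma scalet0 c : tscal c (TC 0 : term X) ≈ TC 0.
Proof. exact: mult0. Qed.

Lemma scaletA a b x : tscal a (tscal b x) ≈ tscal (a * b) x.
Proof. by rewrite /tscal cg_mulA cg_cstM. Qed.

Lemma scaletAC a b x : tscal a (tscal b x) ≈ tscal b (tscal a x).
Proof. by rewrite !scaletA mulrC. Qed.

Lemma opptK x : tneg (tneg x) ≈ x.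
Proof. by rewrite /tneg scaletA mulrNN mulr1 scale1t. Qed.

Lemma scaletDr a x y : tscal a (TA x y) ≈ TA (tscal a x) (tscal a y).
Proof. exact: cg_mulDr. Qed.

Lemma scaletDl a b x : tscal (a + b) x ≈ TA (tscal a x) (tscal b x).
Proof. by rewrite /tscal -cg_mulDl cg_cstD. Qed.

Lemma scaletBr a x y : tscal a (tsub x y) ≈ tsub (tscal a x) (tscal a y).
Proof. by rewrite /tsub /tneg scaletDr; apply: cg_add => //; apply: scaletAC. Qed.

Lemma tmulZl a x y : TM (tscal a x) y ≈ tscal a (TM x y).
Proof. by rewrite /tscal cg_mulA. Qed.

Lemma tmulZr a x y : TM x (tscal a y) ≈ tscal a (TM x y).
Proof. by rewrite /tscal cg_mulA -(cg_cstC _ a) -cg_mulA. Qed.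

Lemma eq_scalet a b x : a = b -> tscal a x ≈ tscal b x.
Proof. by move->. Qed.

Lemma congr_via_scaled c x y x' y' :
  x ≈ tscal c x' -> y ≈ tscal c y' -> x' ≈ y' -> x ≈ y.
Proof. by move=> -> ->  ->. Qed.

Lemma subtt x : tsub x x ≈ TC 0.
Proof. by rewrite /tsub /tneg -{1}(scale1t x) -scaletDl subrr scale0t. Qed.

Lemma subt0_congr x y : tsub x y ≈ TC 0 -> x ≈ y.
Proof.
move=> xy0; rewrite -[y]add0t -xy0 /tsub -addtA (addtC (tneg y)).
by rewrite -/(tsub y y) subtt addt0.
Qed.

(* Needs characteristic 0: [2] is invertible in [CC]. *)
Lemma oppt_fixed_eq0 x : x ≈ tneg x -> x ≈ TC 0.
Proof.
move=> xN; have two0 : (1 + 1 : CC) != 0 by rewrite -[1 + 1]/(2%:R) pnatr_eq0.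
have x2 : tscal (1 + 1) x ≈ TC 0 by rewrite scaletDl scale1t {2}xN -/(tsub x x) subtt.
by rewrite -(scale1t x) -(mulVf two0) -scaletA x2 scalet0.
Qed.

Lemma tsum_cat (l1 l2 : seq (term X)) : tsum (l1 ++ l2) ≈ TA (tsum l1) (tsum l2).
Proof. by elim: l1 => [|x l IH] /=; rewrite ?add0t // IH addtA. Qed.

Lemma eq_tsum (I : Type) (f g : I -> term X) (l : seq I) :
  (forall i, f i ≈ g i) -> tsum (map f l) ≈ tsum (map g l).
Proof. by move=> fg; elim: l => [|i l IH] //=; rewrite fg IH. Qed.

Lemma eq_in_tsum (I : eqType) (f g : I -> term X) (l : seq I) :
  {in l, forall i, f i ≈ g i} -> tsum (map f l) ≈ tsum (map g l).
Proof.
elim: l => [|i l IH] //= fg; rewrite fg ?mem_head // IH // => j jl.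
by rewrite fg // inE jl orbT.
Qed.

Lemma tsum_scale c (l : seq (term X)) : tsum (map (tscal c) l) ≈ tscal c (tsum l).
Proof. by elim: l => [|x l IH] /=; rewrite ?scalet0 // IH scaletDr. Qed.

Lemma eq_tsum4 x1 x2 x3 x4 y1 y2 y3 y4 : x1 ≈ y1 -> x2 ≈ y2 -> x3 ≈ y3 -> x4 ≈ y4 ->
  tsum [:: x1; x2; x3; x4] ≈ tsum [:: y1; y2; y3; y4].
Proof. by move=> /= -> -> -> ->. Qed.

Lemma tsum4_scale c x1 x2 x3 x4 :
  tsum [:: tscal c x1; tscal c x2; tscal c x3; tscal c x4] ≈ tscal c (tsum [:: x1; x2; x3; x4]).
Proof. exact: (tsum_scale c [:: x1; x2; x3; x4]). Qed.

Lemma tsum4_swap23 x1 x2 x3 x4 : tsum [:: x1; x2; x3; x4] ≈ tsum [:: x1; x3; x2; x4].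
Proof. by rewrite /= (addtA x2) (addtC x2) -addtA. Qed.

Lemma tsubst_congr_id (g : X -> term X) (t : term X) :
  (forall v, g v ≈ TG v) -> tsubst g t ≈ t.
Proof. by move=> gE; elim: t => //= t IHt u IHu; rewrite IHt IHu. Qed.

End CongrAlgebra.

Lemma tsubst_tsum X Y (g : X -> term Y) l : tsubst g (tsum l) = tsum (map (tsubst g) l).
Proof. by elim: l => //= x l ->. Qed.

Lemma tsubst_congr X Y (R : term X -> term X -> Prop) (R' : term Y -> term Y -> Prop)
    (g : X -> term Y) :
  (forall t u, R t u -> congr R' (tsubst g t) (tsubst g u)) ->
  forall t u, congr R t u -> congr R' (tsubst g t) (tsubst g u).
Proof.
move=> gR t u; elim=> {t u} /=.
- exact: gR.
- by [].
- by move=> t u _ ->.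
- by move=> t u v _ -> _ ->.
- by move=> t t' u u' _ -> _ ->.
- by move=> t t' u u' _ -> _ ->.
all: move=> *; first [exact: cg_addA | exact: cg_addC | exact: cg_add0 | exact: cg_mulA
  | exact: cg_mul1l | exact: cg_mul1r | exact: cg_mulDl | exact: cg_mulDr | exact: cg_mul0l
  | exact: cg_cstC | exact: cg_cstD | exact: cg_cstM].
Qed.

Lemma tsubst_comp X Y Z (g : Y -> term Z) (h : X -> term Y) t :
  tsubst g (tsubst h t) = tsubst (fun x => tsubst g (h x)) t.
Proof. by elim: t => //= ? -> ? ->. Qed.

Section TsubstPush.
Variables (X Y : Type) (g : X -> term Y).
Implicit Types (x y : term X) (c : CC).

Lemma tsubst_TA x y : tsubst g (TA x y) = TA (tsubst g x) (tsubst g y). Proof. by []. Qed.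
Lemma tsubst_TM x y : tsubst g (TM x y) = TM (tsubst g x) (tsubst g y). Proof. by []. Qed.
Lemma tsubst_TC c : tsubst g (TC c) = TC c. Proof. by []. Qed.
Lemma tsubst_tscal c x : tsubst g (tscal c x) = tscal c (tsubst g x). Proof. by []. Qed.
Lemma tsubst_tneg x : tsubst g (tneg x) = tneg (tsubst g x). Proof. by []. Qed.
Lemma tsubst_tsub x y : tsubst g (tsub x y) = tsub (tsubst g x) (tsubst g y). Proof. by []. Qed.
Lemma tsubst_tsum4 x1 x2 x3 x4 :
  tsubst g (tsum [:: x1; x2; x3; x4])
  = tsum [:: tsubst g x1; tsubst g x2; tsubst g x3; tsubst g x4].
Proof. by []. Qed.
End TsubstPush.

Definition tsubstE := (tsubst_tsub, tsubst_tneg, tsubst_tscal, tsubst_TM, tsubst_TA, tsubst_TC).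

Definition monom := (CC * seq nat)%type.
Definition ncpoly := seq monom.

Fixpoint ncpoly_of (e : term nat) : ncpoly :=
  match e with
  | TG k => [:: (1, [:: k])]
  | TC c => [:: (c, [::])]
  | TA a b => ncpoly_of a ++ ncpoly_of b
  | TM a b => flatten (map (fun u => map (fun v => (u.1 * v.1, u.2 ++ v.2))
                                         (ncpoly_of b)) (ncpoly_of a))
  end.

(* Structural word equality, so that [lazy] can decide it. *)
Fixpoint eqw (w1 w2 : seq nat) : bool :=
  match w1, w2 with
  | [::], [::] => true
  | a :: w1', b :: w2' => eqn a b && eqw w1' w2'
  | _, _ => false
  end.

Lemma eqwE w1 w2 : eqw w1 w2 = (w1 == w2).
Proof. by elim: w1 w2 => [|a w1 IH] [|b w2] //=; rewrite IH eqseq_cons. Qed.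

Definition coefw (w : seq nat) (p : ncpoly) : CC :=
  foldr (fun u acc => if eqw u.2 w then u.1 + acc else acc) 0 p.

Lemma coefw_cons u p w : coefw w (u :: p) = (if u.2 == w then u.1 else 0) + coefw w p.
Proof. by rewrite /coefw /= eqwE; case: (u.2 == w); rewrite ?add0r. Qed.

Fixpoint all_words (l : seq (seq nat)) (P : seq nat -> Prop) : Prop :=
  if l is w :: l' then P w /\ all_words l' P else True.

Lemma all_wordsP l P : all_words l P -> {in l, forall w, P w}.
Proof. by elim: l => //= a l IH [Pa Pl] w; rewrite inE => /orP[/eqP->|/(IH Pl)]. Qed.

Section Evaluation.
Context {X : Type} {R : term X -> term X -> Prop}.
Variable env : nat -> term X.
Local Notation "a ≈ b" := (congr R a b) (at level 70).

Definition eval_word (w : seq nat) : term X := foldr (fun k acc => TM (env k) acc) (TC 1) w.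
Definition eval_ncp (p : ncpoly) : term X := tsum (map (fun u => tscal u.1 (eval_word u.2)) p).

Lemma eval_word_cat w1 w2 : eval_word (w1 ++ w2) ≈ TM (eval_word w1) (eval_word w2).
Proof. by elim: w1 => [|a w IH] /=; rewrite ?cg_mul1l // IH cg_mulA. Qed.

Lemma eval_ncp_cons u p : eval_ncp (u :: p) = TA (tscal u.1 (eval_word u.2)) (eval_ncp p).
Proof. by []. Qed.

Lemma eval_ncp_cat p1 p2 : eval_ncp (p1 ++ p2) ≈ TA (eval_ncp p1) (eval_ncp p2).
Proof. by rewrite /eval_ncp map_cat tsum_cat. Qed.

Lemma eval_ncp_flatten (l : seq ncpoly) : eval_ncp (flatten l) ≈ tsum (map eval_ncp l).
Proof. by elim: l => [|p l IH] //=; rewrite eval_ncp_cat IH. Qed.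

Lemma eval_ncp_scale c p : eval_ncp (map (fun u => (c * u.1, u.2)) p) ≈ tscal c (eval_ncp p).
Proof. by elim: p => [|u p IH] /=; rewrite ?scalet0 // !eval_ncp_cons IH scaletDr scaletA. Qed.

Lemma eval_ncp_mul p1 p2 :
  eval_ncp (flatten (map (fun u => map (fun v => (u.1 * v.1, u.2 ++ v.2)) p2) p1))
  ≈ TM (eval_ncp p1) (eval_ncp p2).
Proof.
have row u : eval_ncp (map (fun v => (u.1 * v.1, u.2 ++ v.2)) p2)
             ≈ TM (tscal u.1 (eval_word u.2)) (eval_ncp p2).
  elim: p2 => [|v p2 IH] /=; first by rewrite mult0.
  by rewrite eval_ncp_cons cg_mulDr -IH eval_word_cat tmulZl tmulZr scaletA.
elim: p1 => [|u p IH] /=; first by rewrite mul0t.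
by rewrite eval_ncp_cat IH row eval_ncp_cons cg_mulDl.
Qed.

Lemma eval_ncp_catr l t :
  eval_ncp (map (fun u => (u.1, u.2 ++ t)) l) ≈ TM (eval_ncp l) (eval_word t).
Proof.
elim: l => [|u l IH]; first by rewrite mul0t.
by rewrite map_cons !eval_ncp_cons IH cg_mulDl eval_word_cat tmulZl.
Qed.

Lemma eval_ncp_consl l a :
  eval_ncp (map (fun u => (u.1, a :: u.2)) l) ≈ TM (env a) (eval_ncp l).
Proof.
elim: l => [|u l IH]; first by rewrite mult0.
by rewrite map_cons !eval_ncp_cons IH cg_mulDr tmulZr.
Qed.

Lemma ncpoly_ofE e : tsubst env e ≈ eval_ncp (ncpoly_of e).
Proof.
elim: e => [k|c|a IHa b IHb|a IHa b IHb] /=.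
- by rewrite /eval_ncp /= addt0 /tscal cg_mul1l cg_mul1r.
- by rewrite /eval_ncp /= addt0 /tscal cg_mul1r.
- by rewrite eval_ncp_cat IHa IHb.
- by rewrite eval_ncp_mul IHa IHb.
Qed.

Lemma eval_ncp_zero_coefs (W : seq (seq nat)) : eval_ncp (map (fun w => (0, w)) W) ≈ TC 0.
Proof. by rewrite /eval_ncp; elim: W => [|w W' IH] //=; rewrite IH scale0t add0t. Qed.

Lemma eval_ncp_coefsD (W : seq (seq nat)) f g :
  eval_ncp (map (fun w => (f w + g w, w)) W) ≈
  TA (eval_ncp (map (fun w => (f w, w)) W)) (eval_ncp (map (fun w => (g w, w)) W)).
Proof.
rewrite /eval_ncp; elim: W => [|w W' IH] /=; first by rewrite add0t.
rewrite IH scaletDl -!addtA; apply: cg_add => //.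
by rewrite !addtA (addtC (tscal (g w) _)).
Qed.

Lemma eval_ncp_delta (W : seq (seq nat)) c w0 : uniq W -> w0 \in W ->
  eval_ncp (map (fun w => (if w0 == w then c else 0, w)) W) ≈ tscal c (eval_word w0).
Proof.
elim: W => [|w W IH] //= /andP[wW uW]; rewrite eval_ncp_cons inE => /orP[/eqP e|w0W] /=.
  subst w; rewrite eqxx -[Y in _ ≈ Y]addt0; apply: cg_add => //.
  rewrite -(eval_ncp_zero_coefs W) /eval_ncp -!map_comp.
  by apply: eq_in_tsum => w' w'W /=; case: eqP => // e; move: wW; rewrite e w'W.
have -> : (w0 == w) = false by apply: contraNF wW => /eqP<-.
by rewrite IH // scale0t add0t.
Qed.

Lemma eval_ncp_collect p (W : seq (seq nat)) : uniq W -> {subset map snd p <= W} ->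
  eval_ncp p ≈ eval_ncp (map (fun w => (coefw w p, w)) W).
Proof.
move=> uW; elim: p => [|u p IH] pW; first by rewrite eval_ncp_zero_coefs.
under eq_map => w do rewrite coefw_cons.
rewrite eval_ncp_coefsD eval_ncp_delta ?(pW _ (mem_head _ _)) // -IH //.
by move=> w wp; apply: pW; rewrite inE wp orbT.
Qed.

Lemma eval_ncp_coefw p1 p2 :
  all_words (map snd (p1 ++ p2)) (fun w => coefw w p1 = coefw w p2) ->
  eval_ncp p1 ≈ eval_ncp p2.
Proof.
move=> /all_wordsP coef12; set W := undup (map snd (p1 ++ p2)).
have uW : uniq W by apply: undup_uniq.
rewrite (@eval_ncp_collect p1 W) //; last by move=> w; rewrite mem_undup map_cat mem_cat => ->.
rewrite (@eval_ncp_collect p2 W) //; last by move=> w; rewrite mem_undup map_cat mem_cat orbC => ->.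
suff -> : map (fun w => (coefw w p1, w)) W = map (fun w => (coefw w p2, w)) W by [].
by apply/eq_in_map => w; rewrite mem_undup => /coef12 ->.
Qed.
End Evaluation.

(* [rw a b = Some p] is the rule [x_a x_b = p]; [rewrite_word] applies the first rule
   that matches two adjacent letters. *)
Section Rewriting.
Variable rw : nat -> nat -> option ncpoly.

Fixpoint rewrite_word (w : seq nat) : option ncpoly :=
  match w with
  | a :: ((b :: t') as t) =>
      match rw a b with
      | Some l => Some (map (fun u => (u.1, u.2 ++ t')) l)
      | None => if rewrite_word t is Some l
                then Some (map (fun u => (u.1, a :: u.2)) l) else None
      end
  | _ => None
  end.

Fixpoint rewrite_nf (fuel : nat) (p : ncpoly) : ncpoly :=
  if fuel is f.+1 then
    flatten (map (fun u => if rewrite_word u.2 is Some l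
                           then rewrite_nf f (map (fun v => (u.1 * v.1, v.2)) l)
                           else [:: u]) p)
  else p.

Context {X : Type} {R : term X -> term X -> Prop}.
Variable env : nat -> term X.
Local Notation "a ≈ b" := (congr R a b) (at level 70).
Local Notation eval_word := (eval_word env).
Local Notation eval_ncp := (eval_ncp env).
Hypothesis rwP : forall a b l, rw a b = Some l -> TM (env a) (env b) ≈ eval_ncp l.

Lemma rewrite_wordP w l : rewrite_word w = Some l -> eval_word w ≈ eval_ncp l.
Proof.
elim: w l => [|a [|b t'] IH] l //.
have -> : rewrite_word [:: a, b & t'] = if rw a b is Some l' then
    Some (map (fun u => (u.1, u.2 ++ t')) l')
  else if rewrite_word (b :: t') is Some l' then
    Some (map (fun u => (u.1, a :: u.2)) l') else None by [].
case rwab: (rw a b) => [l'|].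
  by case=> <-; rewrite eval_ncp_catr -(rwP rwab) -cg_mulA.
move: IH; case: (rewrite_word (b :: t')) => [l'|] //= IH [<-].
by rewrite eval_ncp_consl -(IH l').
Qed.

Lemma rewrite_nfE f p : eval_ncp (rewrite_nf f p) ≈ eval_ncp p.
Proof.
elim: f p => [|f IHf] p //=; rewrite eval_ncp_flatten.
elim: p => [|u p IH] //=; rewrite IH eval_ncp_cons; apply: cg_add => //.
case e: (rewrite_word u.2) => [l|] /=; last by rewrite /eval_ncp /= addt0.
by rewrite IHf eval_ncp_scale -(rewrite_wordP e).
Qed.

Lemma tsubst_congr_by_rewriting f e1 e2 :
  let p1 := rewrite_nf f (ncpoly_of e1) in let p2 := rewrite_nf f (ncpoly_of e2) in
  all_words (map snd (p1 ++ p2)) (fun w => coefw w p1 = coefw w p2) ->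
  tsubst env e1 ≈ tsubst env e2.
Proof.
move=> p1 p2 coef12.
rewrite !ncpoly_ofE -(rewrite_nfE f (ncpoly_of e1)) -(rewrite_nfE f (ncpoly_of e2)).
exact: eval_ncp_coefw.
Qed.
End Rewriting.

Definition qcomm X (x y : term X) (c : CC) : term X := tsub (TM x y) (tscal c (TM y x)).

Definition serre4 X (x1 x2 y z : term X) (a b c : CC) : term X :=
  TA (qcomm x1 (qcomm y (qcomm x2 z a) b) c) (qcomm x2 (qcomm y (qcomm x1 z a) b) c).

(* Letters [0, 1, 2, 3] stand for [x1, x2, y, z] in [serre4_swap]. *)
Definition serre4_rules (sig : CC) (a b : nat) : option ncpoly :=
  match a, b with
  | 0%N, 0%N | 1%N, 1%N => Some [::]
  | 1%N, 0%N => Some [:: (-1, [:: 0%N; 1%N])]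
  | 3%N, 2%N => Some [:: (sig, [:: 2%N; 3%N])]
  | _, _ => None
  end.

(* In the application, [x1, x2] are [E_i(z1), E_i(z2)] at an odd node [i],
   [y, z] are [E_(i+1)(w), E_(i-1)(w')] of parities [pY, pZ], and [t = q ^ s_i]. *)
Lemma serre4_swap X (R : term X -> term X -> Prop) (x1 x2 y z : term X)
    (t : CC) (pY pZ : bool) : t != 0 ->
  congr R (TM x1 x1) (TC 0) -> congr R (TM x2 x2) (TC 0) ->
  congr R (TM x2 x1) (tneg (TM x1 x2)) ->
  congr R (TM z y) (tscal (sgn (pZ && pY)) (TM y z)) ->
  congr R (serre4 x1 x2 z y (sgn pY * t) (sgn (pZ && ~~ pY) / t) (sgn (~~ (pZ (+) pY))))
          (tscal (sgn pY * sgn (pZ && ~~ pY))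
             (serre4 x1 x2 y z (sgn pZ / t) (sgn (pY && ~~ pZ) * t) (sgn (~~ (pY (+) pZ))))).
Proof.
move=> t0 x11 x22 x21 zy.
pose env k := match k with 0%N => x1 | 1%N => x2 | 2%N => y | _ => z end.
pose G k : term nat := TG k.
change (congr R
  (tsubst env (serre4 (G 0%N) (G 1%N) (G 3%N) (G 2%N) (sgn pY * t) (sgn (pZ && ~~ pY) / t)
                      (sgn (~~ (pZ (+) pY)))))
  (tsubst env (tscal (sgn pY * sgn (pZ && ~~ pY))
     (serre4 (G 0%N) (G 1%N) (G 2%N) (G 3%N) (sgn pZ / t) (sgn (pY && ~~ pZ) * t)
             (sgn (~~ (pY (+) pZ))))))).
apply: (@tsubst_congr_by_rewriting (serre4_rules (sgn (pZ && pY))) _ _ _ _ 10).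
  move=> [|[|[|[|k]]]] [|[|[|[|k']]]] l //= [<-]; rewrite /eval_ncp /eval_word /= ?addt0 //.
  - by rewrite x21 cg_mul1r.
  - by rewrite zy cg_mul1r.
lazy beta iota zeta delta [ncpoly_of rewrite_nf rewrite_word coefw eqw all_words serre4
  qcomm tsub tscal tneg serre4_rules G map flatten foldr cat eqn andb fst snd].
by clear zy; case: pY; case: pZ; rewrite /sgn /=; (repeat split); field.
Qed.

Lemma tsubst_qcomm X Y (g : X -> term Y) x y c :
  tsubst g (qcomm x y c) = qcomm (tsubst g x) (tsubst g y) c.
Proof. by []. Qed.

Section QcommCongr.
Context {X : Type} {R : term X -> term X -> Prop}.
Local Notation "a ≈ b" := (congr R a b) (at level 70).

Global Instance qcomm_proper : Proper (congr R ==> congr R ==> eq ==> congr R) (@qcomm X).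
Proof. by move=> ? ? h ? ? h' ? c <-; rewrite /qcomm h h'. Qed.

Lemma qcommZ a b (x y : term X) c : qcomm (tscal a x) (tscal b y) c ≈ tscal (a * b) (qcomm x y c).
Proof.
rewrite /qcomm scaletBr !tmulZl !tmulZr !scaletA.
by apply: tsub_proper => //; apply: eq_scalet; ring.
Qed.
End QcommCongr.

Definition sneg N (s : 'Z_N -> int) : 'Z_N -> int := fun i => - s (1 - i).

Lemma snegK N (s : 'Z_N -> int) : sneg (sneg s) = s.
Proof. by apply: functional_extensionality => i; rewrite /sneg opprK; congr s; ring. Qed.

Lemma eqZ_oppS N (i j : 'Z_N) : (- i == - j + 1) = (i + 1 == j).
Proof. by apply/eqP/eqP => [e|<-]; [rewrite -(opprK i) e | ]; ring. Qed.

Lemma eqZ_Sopp N (i j : 'Z_N) : (- i + 1 == - j) = (i == j + 1).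
Proof. by rewrite eq_sym eqZ_oppS eq_sym. Qed.

Lemma eqZ_diff N (x y : 'Z_N) (k : nat) : (0 < k < N)%N -> y - x = k%:R -> (x == y) = false.
Proof.
move=> /andP[k0 kN] yx; apply/negbTE/eqP => xy.
have N1 : (1 < N)%N by lia.
move: yx; rewrite xy subrr => /(congr1 val) /=.
by rewrite (val_Zp_nat N1) modn_small //; lia.
Qed.

Lemma mul_indicator N (f : 'Z_N -> int) (a b : 'Z_N) :
  f b * ((a == b) : nat)%:Z = f a * ((a == b) : nat)%:Z.
Proof. by case: eqP => [->|_] //; rewrite !mulr0. Qed.

Section IndexReversal.
Variables (N : nat) (s : 'Z_N -> int).
Local Notation s' := (sneg s).

Lemma sneg_opp i : s' (- i) = - s (i + 1).
Proof. by rewrite /sneg; congr (- s _); ring. Qed.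

Lemma sneg_oppS i : s' (- i + 1) = - s i.
Proof. by rewrite /sneg; congr (- s _); ring. Qed.

Lemma par_sneg i : par s' (- i) = par s i.
Proof. by rewrite /par sneg_oppS sneg_opp mulrNN mulrC. Qed.

Lemma Amat_sym i j : Amat s i j = Amat s j i.
Proof.
rewrite /Amat (eq_sym j i) (eq_sym j (i + 1)) (eq_sym (j + 1) i) !mulrDl.
by rewrite (mul_indicator s i j) (mul_indicator (fun k => s (k + 1)) i j); ring.
Qed.

Lemma Amat_sneg i j : Amat s' (- i) (- j) = - Amat s i j.
Proof.
rewrite /Amat eqr_opp eqZ_oppS eqZ_Sopp sneg_opp sneg_oppS sneg_opp.
by rewrite !mulNr -(mul_indicator s (i + 1) j) (mul_indicator s i (j + 1)); ring.
Qed.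

Lemma Mmat_sneg : (2 < N)%N -> forall i j, Mmat s' (- i) (- j) = Mmat s i j.
Proof.
move=> N3 i j; rewrite /Mmat eqZ_oppS (eqZ_oppS j i).
case: (i + 1 =P j) => [<-|ij].
  have -> : (i == i + 1 + 1) = false by apply: (eqZ_diff (k := 2)); [lia | ring].
  by rewrite eqxx sneg_opp.
rewrite (eq_sym j (i + 1)) (introF eqP ij) (eq_sym i (j + 1)).
by case: ifP => //; rewrite sneg_opp opprK => /eqP ->.
Qed.

Lemma form_sneg (a b a' b' : 'Z_N -> int) :
  (forall k, a' k = a (- k)) -> (forall k, b' k = b (- k)) ->
  Defs.form s' a' b' = - Defs.form s a b.
Proof.
move=> aa' bb'; rewrite /Defs.form (reindex_inj oppr_inj) -sumrN; apply: eq_bigr => i _.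
rewrite (reindex_inj oppr_inj) -sumrN; apply: eq_bigr => j _.
by rewrite aa' bb' !opprK Amat_sneg mulrN.
Qed.
End IndexReversal.

(* The signs on [F] and [H] absorb the change of sign of [q - q^-1] under [q -> q^-1],
   in relation (4) and in the exponent of [K^±_i(z)] respectively. *)
Definition tau N (x : gen N) : term (gen N) :=
  match x with
  | GE i r => TG (GE (- i) r)
  | GF i r => tneg (TG (GF (- i) r))
  | GHp i r => tneg (TG (GHp (- i) r))
  | GHm i r => tneg (TG (GHm (- i) r))
  | GK i => TG (GK (- i))
  | GKinv i => TG (GKinv (- i))
  end.

Lemma tau_involutive N (R : term (gen N) -> term (gen N) -> Prop) t :
  congr R (tsubst (@tau N) (tsubst (@tau N) t)) t.
Proof.
rewrite tsubst_comp; apply: tsubst_congr_id => -[i r|i r|i r|i r|i|i] /=; rewrite ?opprK //.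
all: exact: opptK.
Qed.

Lemma tau_homog N (s : 'Z_N -> int) x : homog (gpar (sneg s)) (gpar s x) (tau x).
Proof.
have sc p y : homog (gpar (sneg s)) p y -> homog (gpar (sneg s)) p (tneg y).
  exact: (h_mul (h_cst _ (-1))).
case: x => [i r|i r|i r|i r|i|i].
- by have := h_gen (gpar (sneg s)) (GE (- i) r); rewrite /= par_sneg.
- by apply: sc; have := h_gen (gpar (sneg s)) (GF (- i) r); rewrite /= par_sneg.
- exact/sc/(h_gen _ (GHp (- i) r)).
- exact/sc/(h_gen _ (GHm (- i) r)).
- exact: (h_gen _ (GK (- i))).
- exact: (h_gen _ (GKinv (- i))).
Qed.

Definition qcoef N (s : 'Z_N -> int) (q : CC) (x y : hterm N) : CC :=
  sgn (hpar x && hpar y) * q ^ Defs.form s (hwt x) (hwt y).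

Lemma ht_qbr N (s : 'Z_N -> int) q x y : ht (qbr s q x y) = qcomm (ht x) (ht y) (qcoef s q x y).
Proof. by []. Qed.

Lemma sbr_qcomm N (x y : hterm N) : sbr x y = qcomm (ht x) (ht y) (sgn (hpar x && hpar y)).
Proof. by []. Qed.

Section TauBrackets.
Variables (N : nat) (s : 'Z_N -> int) (q : CC) (R : term (gen N) -> term (gen N) -> Prop).
Local Notation "a ≈ b" := (congr R a b) (at level 70).
Local Notation s' := (sneg s).
Local Notation tauS := (tsubst (@tau N)).

Definition tau_sends (x x' : hterm N) (c : CC) :=
  [/\ tauS (ht x) ≈ tscal c (ht x'), hpar x' = hpar x & forall k, hwt x' k = hwt x (- k)].

Lemma tau_sends_hX f i r : tau_sends (hX s f i r) (hX s' f (- i) r) (sgn f).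
Proof.
split => [|/=|k /=]; last by rewrite -eqr_oppLR.
  by case: f => /=; rewrite ?scale1t.
exact: par_sneg.
Qed.

Lemma expr_invN (z : int) : (q^-1) ^ (- z) = q ^ z.
Proof. by rewrite exprz_inv opprK. Qed.

Lemma tau_sends_qbr x x' c1 y y' c2 : tau_sends x x' c1 -> tau_sends y y' c2 ->
  tau_sends (qbr s q x y) (qbr s' q^-1 x' y') (c1 * c2).
Proof.
move=> [xx' px wx] [yy' py wy]; split => [|/=|k /=]; last by rewrite wx wy.
  by rewrite !ht_qbr tsubst_qcomm xx' yy' qcommZ /qcoef px py (form_sneg s wx wy) expr_invN.
by rewrite px py.
Qed.

Lemma tau_sends_ht x x' c : tau_sends x x' c -> tauS (ht x) ≈ tscal c (ht x').
Proof. by case. Qed.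

Lemma tau_sbr x x' c1 y y' c2 : tau_sends x x' c1 -> tau_sends y y' c2 ->
  tauS (sbr x y) ≈ tscal (c1 * c2) (sbr x' y').
Proof. by move=> [xx' px _] [yy' py _]; rewrite !sbr_qcomm tsubst_qcomm xx' yy' qcommZ px py. Qed.

Lemma tau_Xg f i r : tauS (Xg s f i r) ≈ tscal (sgn f) (Xg s' f (- i) r).
Proof. by case: (tau_sends_hX f i r). Qed.
End TauBrackets.

Section TauKSeries.
Variables (N : nat) (q : CC) (R : term (gen N) -> term (gen N) -> Prop).
Local Notation "a ≈ b" := (congr R a b) (at level 70).
Local Notation tauS := (tsubst (@tau N)).

Lemma tau_Xpow p i k r : tauS (Xpow p i k r) ≈ tscal ((-1) ^+ k) (Xpow p (- i) k r).
Proof.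
elim: k r => [|k IH] r; first by rewrite expr0 scale1t /=; case: (r == 0%N).
rewrite [Xpow _ _ k.+1 _]/= tsubst_tsum -map_comp -tsum_scale -map_comp.
apply: eq_tsum => a; rewrite /comp tsubst_TM.
have -> : tauS (Hc p i a) = tneg (Hc p (- i) a) by case: (p).
by rewrite IH tmulZl tmulZr scaletA exprS mulrC.
Qed.

Lemma tau_Expc p i r : tauS (Expc q p i r) ≈ Expc q^-1 p (- i) r.
Proof.
rewrite /Expc tsubst_tsum -map_comp; apply: eq_tsum => k.
rewrite /comp tsubst_tscal tau_Xpow scaletA; apply: eq_scalet.
by rewrite invrK mulrAC -exprMn mulrN1 -mulrN opprB.
Qed.

Lemma tau_Kser p i k : tauS (Kser q p i k) ≈ Kser q^-1 p (- i) k.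
Proof. by rewrite /Kser; case: p; case: ifP => _; rewrite ?tsubst_TM ?tau_Expc. Qed.
End TauKSeries.

Lemma form_hX N (s : 'Z_N -> int) f f' i j a b :
  Defs.form s (hwt (hX s f i a)) (hwt (hX s f' j b)) = ep f * ep f' * Amat s i j.
Proof.
rewrite /Defs.form (bigD1 i) //= [X in _ + X]big1 => [|k /negbTE ki]; last first.
  by rewrite big1 // => l _; rewrite ki /=; ring.
rewrite (bigD1 j) //= [X in _ + X + _]big1 => [|k /negbTE kj]; last by rewrite kj /=; ring.
by rewrite !eqxx /=; ring.
Qed.

Lemma form_qbr_r N (s : 'Z_N -> int) q a x y :
  Defs.form s a (hwt (qbr s q x y)) = Defs.form s a (hwt x) + Defs.form s a (hwt y).
Proof.
rewrite /Defs.form -big_split /=; apply: eq_bigr => i _.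
by rewrite -big_split /=; apply: eq_bigr => j _; ring.
Qed.

Lemma ep2 f : ep f * ep f = 1.
Proof. by case: f. Qed.

Section SwappedSerre.
Variables (N m n : nat) (s : 'Z_N -> int) (d q : CC).
Hypotheses (N4 : (3 < N)%N) (s_sign : forall i, s i = 1 \/ s i = -1) (q0 : q != 0).
Variable i : 'Z_N.
Hypotheses (Aii : Amat s i i = 0) (mn2 : (m * n != 2)%N).
Local Notation R := (Defs.rel m n s d q).
Local Notation "a ≈ b" := (congr R a b) (at level 70).
Local Notation X := (hX s).
Local Notation Q := (qbr s q).

Let i_ip1 : (i == i + 1) = false.
Proof. by apply: (eqZ_diff (k := 1)); [lia | ring]. Qed.
Let ip1_i : (i + 1 == i) = false.
Proof. by rewrite eq_sym i_ip1. Qed.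
Let i_ip2 : (i == i + 1 + 1) = false.
Proof. by apply: (eqZ_diff (k := 2)); [lia | ring]. Qed.
Let i_im1 : (i == i - 1) = false.
Proof. by rewrite eq_sym; apply: (eqZ_diff (k := 1)); [lia | ring]. Qed.
Let ip1_im1 : (i + 1 == i - 1) = false.
Proof. by rewrite eq_sym; apply: (eqZ_diff (k := 2)); [lia | ring]. Qed.
Let im1_ip1 : (i - 1 == i + 1) = false.
Proof. by rewrite eq_sym ip1_im1. Qed.
Let im1_ip2 : (i - 1 == i + 1 + 1) = false.
Proof. by apply: (eqZ_diff (k := 3)); [lia | ring]. Qed.
Let im1S_ip1 : (i - 1 + 1 == i + 1) = false.
Proof. by apply: (eqZ_diff (k := 1)); [lia | ring]. Qed.

Lemma sum_s_i_ip1 : s i + s (i + 1) = 0.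
Proof. by move: Aii; rewrite /Amat eqxx i_ip1 ip1_i /=; lia. Qed.

Lemma par_i : par s i.
Proof.
by rewrite /par; have := sum_s_i_ip1; case: (s_sign i) => ->; case: (s_sign (i + 1)) => ->.
Qed.

Lemma Amat_i_ip1 : Amat s i (i + 1) = s i.
Proof. by move: sum_s_i_ip1; rewrite /Amat i_ip1 i_ip2 eqxx /=; lia. Qed.

Lemma Amat_i_im1 : Amat s i (i - 1) = - s i.
Proof. by rewrite /Amat i_im1 subrK eqxx ip1_im1 /=; lia. Qed.

Lemma Amat_im1_ip1 : Amat s (i - 1) (i + 1) = 0.
Proof. by rewrite /Amat im1_ip1 im1_ip2 im1S_ip1 /=; lia. Qed.

Lemma Xg_i_anticomm f u v : TM (Xg s f i u) (Xg s f i v) ≈ tneg (TM (Xg s f i v) (Xg s f i u)).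
Proof. by have := subt0_congr (cg_rel (@r5_zero _ m n s d q f i i u v Aii)); rewrite /= par_i. Qed.

Lemma Xg_im1_ip1_comm f e c :
  TM (Xg s f (i - 1) e) (Xg s f (i + 1) c)
  ≈ tscal (sgn (par s (i - 1) && par s (i + 1))) (TM (Xg s f (i + 1) c) (Xg s f (i - 1) e)).
Proof. exact: subt0_congr (cg_rel (@r5_zero _ m n s d q f (i - 1) (i + 1) e c Amat_im1_ip1)). Qed.

(* Relation (6) at an odd node with [i - 1] and [i + 1] exchanged: [tau] maps relation (6)
   of [E_s] at [i] to this relation of [E_s'] at [- i], since [- (i + 1) = - i - 1]. *)
Lemma swapped_serre f a b c e :
  TA (ht (Q (X f i a) (Q (X f (i - 1) e) (Q (X f i b) (X f (i + 1) c)))))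
     (ht (Q (X f i b) (Q (X f (i - 1) e) (Q (X f i a) (X f (i + 1) c))))) ≈ TC 0.
Proof.
set pY := par s (i + 1); set pZ := par s (i - 1); set t := q ^ s i.
have t0 : t != 0 by rewrite expfz_neq0.
have pi := par_i.
have Aip1i : Amat s (i + 1) i = s i by rewrite Amat_sym Amat_i_ip1.
have Aim1i : Amat s (i - 1) i = - s i by rewrite Amat_sym Amat_i_im1.
have Aip1im1 : Amat s (i + 1) (i - 1) = 0 by rewrite Amat_sym Amat_im1_ip1.
have cA u : qcoef s q (X f i u) (X f (i + 1) c) = sgn pY * t.
  by rewrite /qcoef form_hX ep2 mul1r Amat_i_ip1 /= pi.
have cB u : qcoef s q (X f (i - 1) e) (Q (X f i u) (X f (i + 1) c)) = sgn (pZ && ~~ pY) / t.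
  by rewrite /qcoef form_qbr_r !form_hX ep2 !mul1r Aim1i Amat_im1_ip1 addr0 invr_expz /= pi.
have cC u v : qcoef s q (X f i u) (Q (X f (i - 1) e) (Q (X f i v) (X f (i + 1) c)))
              = sgn (~~ (pZ (+) pY)).
  rewrite /qcoef !form_qbr_r !form_hX ep2 !mul1r Amat_i_im1 Amat_i_ip1 Aii.
  by rewrite add0r addNr expr0z mulr1 /= pi addbN.
have cD u : qcoef s q (X f i u) (X f (i - 1) e) = sgn pZ / t.
  by rewrite /qcoef form_hX ep2 mul1r Amat_i_im1 invr_expz /= pi.
have cE u : qcoef s q (X f (i + 1) c) (Q (X f i u) (X f (i - 1) e)) = sgn (pY && ~~ pZ) * t.
  by rewrite /qcoef form_qbr_r !form_hX ep2 !mul1r Aip1i Aip1im1 addr0 /= pi.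
have cF u v : qcoef s q (X f i u) (Q (X f (i + 1) c) (Q (X f i v) (X f (i - 1) e)))
              = sgn (~~ (pY (+) pZ)).
  rewrite /qcoef !form_qbr_r !form_hX ep2 !mul1r Amat_i_im1 Amat_i_ip1 Aii.
  by rewrite add0r subrr expr0z mulr1 /= pi addbN.
have anti := Xg_i_anticomm f.
have r6 := cg_rel (r6b d q f a b c e mn2 Aii).
rewrite !ht_qbr !cD !cE !cF in r6; rewrite !ht_qbr !cA !cB !cC.
apply: cg_trans (serre4_swap t0 (oppt_fixed_eq0 (anti a a)) (oppt_fixed_eq0 (anti b b))
                   (anti b a) (Xg_im1_ip1_comm f e c)) _.
by rewrite -(scalet0 (sgn pY * sgn (pZ && ~~ pY))); apply: tscal_proper.
Qed.
End SwappedSerre.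

Section TauPreservesRelations.
Variables (N m n : nat) (s : 'Z_N -> int) (d q : CC).
Hypotheses (N3 : (2 < N)%N) (s_sign : forall i, s i = 1 \/ s i = -1) (q0 : q != 0).
Hypothesis serre_N4 : forall i, (m * n != 2)%N -> Amat s i i = 0 -> (3 < N)%N.
Local Notation s' := (sneg s).
Local Notation R' := (Defs.rel n m s' d q^-1).
Local Notation tauS := (tsubst (@tau N)).
Local Notation "a ≈ b" := (congr R' a b) (at level 70).
Local Notation TX := (tau_sends_hX s R').
Local Notation TQ := (tau_sends_qbr s q).

(* Indexed by a proof of the relation, so that [t] and [u] are read off a constructor. *)
Definition tau_preserves t u (_ : Defs.rel m n s d q t u) : Prop := tauS t ≈ tauS u.

Lemma sneg_sign i : s' i = 1 \/ s' i = -1.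
Proof. by rewrite /sneg; case: (s_sign (1 - i)) => ->; [right | left]. Qed.

Lemma tau_r1_KX f i j r : tau_preserves (@r1_KX _ m n s d q f i j r).
Proof.
have T := cg_rel (@r1_KX _ n m s' d q^-1 f (- i) (- j) r).
rewrite Amat_sneg mulrN expr_invN in T.
apply: (congr_via_scaled (c := sgn f) _ _ T); rewrite /tau_preserves !tsubstE tau_Xg.
- by rewrite tmulZr tmulZl.
- by rewrite scaletAC.
Qed.

Lemma tau_r3 p f i j a b : tau_preserves (@r3 _ m n s d q p f i j a b).
Proof.
have T := cg_rel (@r3 _ n m s' d q^-1 p f (- i) (- j) a b).
rewrite (Mmat_sneg s N3) Amat_sneg mulrN expr_invN in T.
apply: (congr_via_scaled (c := sgn f) _ _ T);
  rewrite !tsubstE !tau_Kser !tau_Xg ?tmulZr ?tmulZl scaletBr !scaletA;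
  by apply: tsub_proper; apply: eq_scalet; ring.
Qed.

Lemma tau_r4 i j a b : tau_preserves (@r4 _ m n s d q i j a b).
Proof.
have T := cg_rel (@r4 _ n m s' d q^-1 (- i) (- j) a b).
rewrite eqr_opp invrK in T.
apply: (congr_via_scaled (c := sgn false * sgn true) _ _ T).
  exact: (tau_sbr (TX false i a) (TX true j b)).
rewrite /tau_preserves !tsubstE !tau_Kser scaletA; apply: eq_scalet.
by rewrite /sgn -[q^-1 - q]opprB invrN; ring.
Qed.

Lemma tau_r5_zero f i j a b (h : Amat s i j = 0) :
  tau_preserves (@r5_zero _ m n s d q f i j a b h).
Proof.
have h' : Amat s' (- i) (- j) = 0 by rewrite Amat_sneg h oppr0.
have T := cg_rel (@r5_zero _ n m s' d q^-1 f _ _ a b h').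
apply: (congr_via_scaled (c := sgn f * sgn f) _ _ T).
  exact: (tau_sbr (TX f i a) (TX f j b)).
by rewrite /tau_preserves scalet0.
Qed.

Lemma tau_r5 f i j a b (h : Amat s i j != 0) : tau_preserves (@r5 _ m n s d q f i j a b h).
Proof.
have h' : Amat s' (- i) (- j) != 0 by rewrite Amat_sneg oppr_eq0.
have T := cg_rel (@r5 _ n m s' d q^-1 f (- i) (- j) a b h').
rewrite (Mmat_sneg s N3) Amat_sneg mulrN expr_invN !par_sneg in T.
apply: (congr_via_scaled (c := sgn f * sgn f) _ _ T);
  rewrite !tsubstE !tau_Xg !tmulZl !tmulZr ?scaletBr !scaletA;
  by apply: tsub_proper; apply: eq_scalet; ring.
Qed.

Lemma tau_r6a f e i a b c (h : Amat s i i != 0) :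
  tau_preserves (@r6a _ m n s d q f e i a b c h).
Proof.
have h' : Amat s' (- i) (- i) != 0 by rewrite Amat_sneg oppr_eq0.
have T := cg_rel (@r6a _ n m s' d q^-1 f (~~ e) (- i) a b c h').
set k := if e then i + 1 else i - 1.
have ek : - k = if ~~ e then - i + 1 else - i - 1 by rewrite /k; case: (e) => /=; ring.
have M (u v : int) := tau_sends_ht (TQ (TX f i u) (TQ (TX f i v) (TX f k c))).
rewrite ek in M.
apply: (congr_via_scaled (c := sgn f * (sgn f * sgn f)) _ _ T); rewrite /tau_preserves.
  by rewrite tsubst_TA (M a b) (M b a) -scaletDr.
by rewrite scalet0.
Qed.

Lemma tau_r6b f i a b c e mn (Aii : Amat s i i = 0) :
  tau_preserves (@r6b _ m n s d q f i a b c e mn Aii).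
Proof.
have Aii' : Amat s' (- i) (- i) = 0 by rewrite Amat_sneg Aii oppr0.
have mn' : (n * m != 2)%N by rewrite mulnC.
have T := @swapped_serre N n m s' d q^-1 (serre_N4 mn Aii) sneg_sign (invr_neq0 q0)
  (- i) Aii' mn' f a b e c.
have [e1 e2] : - (i + 1) = - i - 1 /\ - (i - 1) = - i + 1 by split; ring.
have M (u v : int) :=
  tau_sends_ht (TQ (TX f i u) (TQ (TX f (i + 1) c) (TQ (TX f i v) (TX f (i - 1) e)))).
rewrite e1 e2 in M.
apply: (congr_via_scaled (c := sgn f * (sgn f * (sgn f * sgn f))) _ _ T); rewrite /tau_preserves.
  by rewrite tsubst_TA (M a b) (M b a) -scaletDr.
by rewrite scalet0.
Qed.

Lemma tau_r6c f i a1 a2 b1 b2 c mn (h : Amat s i i != 0) :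
  tau_preserves (@r6c _ m n s d q f i a1 a2 b1 b2 c mn h).
Proof.
have h' : Amat s' (- i) (- i) != 0 by rewrite Amat_sneg oppr_eq0.
have mn' : (n * m == 2)%N by rewrite mulnC.
have T := cg_rel (@r6c _ n m s' d q^-1 f (- i) b1 b2 a1 a2 c mn' h').
have [e1 e2] : - (i + 1) = - i - 1 /\ - (i - 1) = - i + 1 by split; ring.
have ML (z1 z2 w1 w2 : int) := tau_sends_ht (TQ (TX f (i - 1) z1)
  (TQ (TX f (i + 1) w1) (TQ (TX f (i - 1) z2) (TQ (TX f (i + 1) w2) (TX f i c))))).
have MR (z1 z2 w1 w2 : int) := tau_sends_ht (TQ (TX f (i + 1) w1)
  (TQ (TX f (i - 1) z1) (TQ (TX f (i + 1) w2) (TQ (TX f (i - 1) z2) (TX f i c))))).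
rewrite e1 e2 in ML MR.
rewrite /tau_preserves !tsubst_tsum4.
rewrite (eq_tsum4 (ML a1 a2 b1 b2) (ML a2 a1 b1 b2) (ML a1 a2 b2 b1) (ML a2 a1 b2 b1)).
rewrite (eq_tsum4 (MR a1 a2 b1 b2) (MR a2 a1 b1 b2) (MR a1 a2 b2 b1) (MR a2 a1 b2 b1)).
by rewrite !tsum4_scale tsum4_swap23 [X in _ ≈ tscal _ X]tsum4_swap23 T.
Qed.

Lemma tau_rel t u (tu : Defs.rel m n s d q t u) : tau_preserves tu.
Proof.
case: tu => {t u}; try by move=> *; apply: cg_rel; constructor.
- exact: tau_r1_KX.
- by move=> p i j a b; rewrite /tau_preserves !tsubst_TM !tau_Kser; apply/cg_rel/r2_same.
- by move=> i j a b; rewrite /tau_preserves !tsubst_TM !tau_Kser; apply/cg_rel/r2_mp.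
- exact: tau_r3.
- exact: tau_r4.
- exact: tau_r5_zero.
- exact: tau_r5.
- exact: tau_r6a.
- exact: tau_r6b.
- exact: tau_r6c.
Qed.

Lemma tau_congr t u : Eeq m n s d q t u -> Eeq n m s' d q^-1 (tauS t) (tauS u).
Proof. exact/tsubst_congr/tau_rel. Qed.
End TauPreservesRelations.

(* For [N = 3] an odd node forces [{m, n} = {1, 2}]; hence relation (6) at an odd node
   only occurs when [i - 1, i, i + 1, i + 2] are distinct, as [swapped_serre] needs. *)
Lemma Amat_diag0_N_gt3 m n (s : 'Z_(m + n) -> int) :
  (3 <= m + n)%N -> (forall i, s i = 1 \/ s i = -1) ->
  #|[set i : 'Z_(m + n) | s i == 1]| = m ->
  forall i, (m * n != 2)%N -> Amat s i i = 0 -> (3 < m + n)%N.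
Proof.
move=> N3 s_sign card i mn Aii; rewrite ltn_neqAle N3 andbT; apply/eqP => N3e.
have ii1 : (i == i + 1) = false by apply: (eqZ_diff (k := 1)); [lia | ring].
have sum0 : s i + s (i + 1) = 0 by move: Aii; rewrite /Amat eqxx ii1 eq_sym ii1 /=; lia.
set S := [set j : 'Z_(m + n) | s j == 1].
have [jin [jout [s_jin s_jout]]] : exists j j', s j = 1 /\ s j' <> 1.
  by case: (s_sign i) => h; [exists i, (i + 1) | exists (i + 1), i]; split; lia.
have S_gt0 : (0 < #|S|)%N by apply/card_gt0P; exists jin; rewrite inE s_jin.
have S_lt : (#|S| < #|[set: 'Z_(m + n)]|)%N.
  by apply/proper_card/properP; split; [exact: subsetT | exists jout; rewrite ?inE //; apply/eqP].
have cardZ : #|[set: 'Z_(m + n)]| = (m + n)%N by rewrite cardsT card_ord Zp_cast //; lia.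
rewrite cardZ in S_lt; rewrite card in S_gt0 S_lt.
by move: mn; have [[-> ->]|[-> ->]] : (m = 1 /\ n = 2 \/ m = 2 /\ n = 1)%N by lia.
Qed.

Unset Implicit Arguments.
Set Strict Implicit.
Set Printing Implicit Defensive.

Theorem lemma2p1 (m n : nat) (s : 'Z_(m + n) -> int) (d q : CC) :
  m != n -> (3 <= m + n)%N ->
  (forall i, s i = 1 \/ s i = -1) ->
  #|[set i : 'Z_(m + n) | s i == 1]| = m ->
  d != 0 -> q != 0 ->
  (forall a b c : int,
      (d / q) ^ a * (q ^+ 2) ^ b * (d^-1 / q) ^ c = 1 -> a = b /\ b = c) ->
  let s' : 'Z_(m + n) -> int := fun i => - s (1 - i) in
  exists g : gen (m + n) -> term (gen (m + n)),
    (* tau is well defined on E_s --> E_{s'}(q3^-1,q2^-1,q1^-1) *)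
    (forall t u, Eeq m n s d q t u ->
                 Eeq n m s' d q^-1 (tsubst g t) (tsubst g u)) /\
    (* injective *)
    (forall t u, Eeq n m s' d q^-1 (tsubst g t) (tsubst g u) ->
                 Eeq m n s d q t u) /\
    (* surjective *)
    (forall u, exists t, Eeq n m s' d q^-1 (tsubst g t) u) /\
    (* even map of superalgebras *)
    (forall x, exists t, homog (gpar s') (gpar s x) t /\
                         Eeq n m s' d q^-1 (g x) t) /\
    (* values on generating series *)
    (forall i r, Eeq n m s' d q^-1 (g (GE i r)) (TG (GE (- i) r))) /\
    (forall i r, Eeq n m s' d q^-1 (g (GF i r)) (tneg (TG (GF (- i) r)))) /\
    (forall p i k, Eeq n m s' d q^-1 (tsubst g (Kser q p i k))
                                     (Kser q^-1 p (- i) k)).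
Proof.
move=> _ N3 s_sign card _ q0 _ s'.
have serre_N4 := Amat_diag0_N_gt3 N3 s_sign card.
have serre_N4' i : (n * m != 2)%N -> Amat (sneg s) i i = 0 -> (3 < m + n)%N.
  move=> nm Aii; apply: (serre_N4 (- i)); first by rewrite mulnC.
  by apply/eqP; rewrite -oppr_eq0 -Amat_sneg !opprK; apply/eqP.
have tau_congr' := tau_congr N3 (sneg_sign s_sign) (invr_neq0 q0) serre_N4'.
rewrite /= snegK invrK in tau_congr'.
exists (@tau (m + n)); split; [|split; [|split; [|split; [|split; [|split]]]]].
- exact: tau_congr N3 s_sign q0 serre_N4.
- by move=> t u /tau_congr'; rewrite /Eeq !tau_involutive.
- by move=> u; exists (tsubst (@tau _) u); apply: tau_involutive.
- by move=> x; exists (tau x); split; [exact: tau_homog | reflexivity].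
- by move=> i r; reflexivity.
- by move=> i r; reflexivity.
- by move=> p i k; apply: tau_Kser.
Qed.
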